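(* Fix $g\in\{0,1\}$ and a maximal lag $p\in\mathbb{N}$. Suppose that there exists at least one lag $h\in\{0,\dots,p\}$ with $\|\mathcal{R}_h\|_{\mathcal{S}}>0$, and that $E\|X_k^{(g')}\|^4<\infty$ for $g'=0,1$. Let $Y_1,\dots,Y_{p+1}$ be consecutive functions from group $\Pi_g$, and classify them with the oracle classifier (built from the true operators $\kappa^{(h)}_{g'}$ and the true discriminative feature functions $\nu_{h,j}$, with fixed dimensions $d_h$ and weights $W(h)>0$). Then the misclassification probability satisfies $$P\big(\Pi_{1-g}\,\big|\,\Pi_g,\{\nu_{h,j}\colon h\ge0,j\ge1\}\big)\le \frac{4\sum_{h=0}^p\Big(W(h)\sum_{i,j=1}^{d_h}\sigma^h_{ij}\Big)}{\sum_{h=0}^p\Big(W(h)\sum_{j=1}^{d_h}\lambda_{hj}\Big)}\wedge 1 .$$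
   Context: Work in $L^2[0,1]$ with inner product $\langle x,y\rangle=\int_0^1x(t)y(t)\,dt$ and norm $\|x\|=\langle x,x\rangle^{1/2}$. For an operator $\Phi$ on $L^2[0,1]$, the Hilbert–Schmidt norm is $\|\Phi\|_{\mathcal{S}}^2=\sum_{i,j}\langle\Phi(e_i),e_j\rangle^2$ for any orthonormal basis $(e_i)$. For each group $g\in\{0,1\}$, $\{X_k^{(g)}\colon k\ge1\}$ is a weakly stationary sequence of random functions in $L^2[0,1]$ with mean function zero. For $h\in\mathbb{N}$ the lag-$h$ (auto-)covariance operators are $C_g^{(h)}(\cdot)=E\{X_k^{(g)}\langle X_{k+h}^{(g)},\cdot\rangle\}$ and $C_g^{(-h)}(\cdot)=E\{X_{k+h}^{(g)}\langle X_k^{(g)},\cdot\rangle\}$, and $\kappa_g^{(h)}=C_g^{(h)}+C_g^{(-h)}$. Let $\mathcal{R}_h=(\kappa_0^{(h)}-\kappa_1^{(h)})^2$, with spectral decomposition $\mathcal{R}_h(\cdot)=\sum_{j\ge1}\lambda_{hj}\langle\nu_{h,j},\cdot\rangle\nu_{h,j}$, $\lambda_{h1}>\lambda_{h2}>\cdots\ge 0$, $\{\nu_{h,j}\}_j$ orthonormal (the discriminative feature functions of lag $h$). A set of consecutive functions $Y_1,\dots,Y_{p+1}$ ''from group $\Pi_g$'' means they are consecutive elements of a process with the same law as $\{X_k^{(g)}\}$. For $0\le h\le p$ define $$\hat\kappa_{y,h}(\cdot)=\frac{1}{p+1-h}\sum_{k=1}^{p+1-h}\Big(Y_k\langle Y_{k+h},\cdot\rangle+Y_{k+h}\langle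 Y_k,\cdot\rangle\Big),$$ $y^h_{ij}=\langle\hat\kappa_{y,h}(\nu_{h,i}),\nu_{h,j}\rangle$, and $\sigma^h_{ij}=E\{y^h_{ij}-\langle\kappa_g^{(h)}(\nu_{h,i}),\nu_{h,j}\rangle\}^2$ (expectation when the $Y_k$ come from group $g$). The oracle classifier computes, for $g'=0,1$, $D_{g'}=\sum_{h=0}^pW(h)\sum_{i,j=1}^{d_h}\big(\langle\kappa^{(h)}_{g'}(\nu_{h,i}),\nu_{h,j}\rangle-y^h_{ij}\big)^2$ and assigns $Y_1,\dots,Y_{p+1}$ to $\Pi_0$ if $D_0-D_1<0$ and to $\Pi_1$ otherwise. $P(\Pi_{1-g}\mid\Pi_g,\cdot)$ denotes the probability that functions from group $\Pi_g$ are assigned to $\Pi_{1-g}$. $a\wedge b=\min(a,b)$. *)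

From HB Require Import structures.
From mathcomp Require Import all_boot all_order all_algebra.
From mathcomp Require Import all_classical all_reals all_analysis.
Import Order.TTheory GRing.Theory Num.Theory numFieldNormedType.Exports.
Set Implicit Arguments. Unset Strict Implicit. Unset Printing Implicit Defensive.
Local Open Scope classical_set_scope.
Local Open Scope ring_scope.

(* Elements of L^2[0,1] are represented by functions R -> R (inner products
   only see them up to a.e. equality on [0,1]). *)

Definition I01 (R : realType) : set R := `[(0:R), (1:R)].

Definition ip (R : realType) (x y : R -> R) : R :=
  Rintegral (@lebesgue_measure R) (@I01 R) (fun t => x t * y t).

Definition l2norm (R : realType) (x : R -> R) : R := Num.sqrt (ip x x).

Definition L2 (R : realType) (x : R -> R) : Prop :=
  measurable_fun (@I01 R) x /\
  (@lebesgue_measure R).-integrable (@I01 R) (fun t => ((x t) ^+ 2)%:E).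

Definition orthonormal (R : realType) (e : nat -> R -> R) : Prop :=
  (forall i, L2 (e i)) /\ (forall i j, ip (e i) (e j) = (i == j)%:R).

Definition ONB (R : realType) (e : nat -> R -> R) : Prop :=
  orthonormal e /\
  forall x, L2 x ->
    (fun n : nat => l2norm (fun t => x t - \sum_(i < n) ip (e i) x * e i t))
      @ \oo --> (0:R)%R.

Definition hs_sq (R : realType) (Phi : (R -> R) -> (R -> R)) (e : nat -> R -> R)
  : \bar R :=
  (\sum_(0 <= i <oo) \sum_(0 <= j <oo) (((ip (Phi (e i)) (e j)) ^+ 2)%:E))%E.

(* Index j = 0 here is
   the paper's j = 1. *)
Definition spectral_decomp (R : realType) (Phi : (R -> R) -> (R -> R))
  (lam : nat -> R) (nu : nat -> R -> R) : Prop :=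
  orthonormal nu /\
  (forall j, 0 <= lam j) /\
  (forall j, lam j.+1 <= lam j) /\
  (forall j, 0 < lam j.+1 -> lam j.+1 < lam j) /\
  forall x, L2 x ->
    (fun n : nat => l2norm (fun t => Phi x t - \sum_(j < n) lam j * ip (nu j) x * nu j t))
      @ \oo --> (0:R)%R.

(* Delta_h = kappa_0^(h) - kappa_1^(h), groups indexed by bool (false = Pi_0) *)
Definition Delta (R : realType) (K : bool -> nat -> (R -> R) -> (R -> R)) (h : nat)
  (x : R -> R) : R -> R := fun t => K false h x t - K true h x t.

Definition Rop (R : realType) (K : bool -> nat -> (R -> R) -> (R -> R)) (h : nat)
  (x : R -> R) : R -> R := Delta K h (Delta K h x).

(* y^h_{ij} = < hat kappa_{y,h}(nu_{h,i}), nu_{h,j} >, for Y_1..Y_{p+1} *)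
Definition yhat (R : realType) (p : nat) (Y : nat -> R -> R) (nu : nat -> nat -> R -> R)
  (h i j : nat) : R :=
  ((p.+1 - h)%:R)^-1 *
  \sum_(1 <= k < (p.+1 - h).+1)
     (ip (Y k) (nu h j) * ip (Y (k + h)%N) (nu h i)
      + ip (Y (k + h)%N) (nu h j) * ip (Y k) (nu h i)).

Definition kap (R : realType) (K : bool -> nat -> (R -> R) -> (R -> R))
  (nu : nat -> nat -> R -> R) (g : bool) (h i j : nat) : R :=
  ip (K g h (nu h i)) (nu h j).

Definition Dstat (R : realType) (p : nat) (W : nat -> R) (d : nat -> nat)
  (K : bool -> nat -> (R -> R) -> (R -> R)) (nu : nat -> nat -> R -> R)
  (Y : nat -> R -> R) (g' : bool) : R :=
  \sum_(h < p.+1) W h * \sum_(i < d h) \sum_(j < d h)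
     (kap K nu g' h i j - yhat p Y nu h i j) ^+ 2.

Set Warnings "-notation-overridden,-ambiguous-paths,-notation-incompatible-prefix".
From HB Require Import structures.
From mathcomp Require Import all_boot all_order all_algebra.
From mathcomp Require Import all_classical all_reals all_analysis.
From mathcomp Require Import ring lra measurable_realfun.
Import Order.TTheory GRing.Theory Num.Theory numFieldNormedType.Exports.
Local Open Scope classical_set_scope.
Local Open Scope ring_scope.

(* Write y for the array of empirical coefficients y^h_ij, a_g' for the array
   <kappa_g'^(h) nu_{h,i}, nu_{h,j}>, and |.|_W^2 for the weighted sum
   sum_h W(h) sum_{i,j < d_h} (.)^2, so that D_g' = |a_g' - y|_W^2.
   1. If the sample from group g is misclassified, y is at least as close to
      a_{1-g} as to a_g, hence |y - a_g|_W^2 >= |a_0 - a_1|_W^2 / 4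
      (wdist_misassigned).
   2. R_h = Delta_h^2 with Delta_h = kappa_0^(h) - kappa_1^(h) symmetric, so
      in the eigenbasis nu_h the matrix of Delta_h is diagonal with squared
      entries lambda_hj (section SquareSpectrum).  Hence
      |a_0 - a_1|_W^2 = sum_h W(h) sum_{j < d_h} lambda_hj, which is positive
      because some ||R_h||_S > 0 (gapE, gap_gt0).
   3. Markov's inequality for |y - a_g|_W^2, whose expectation is
      sum_h W(h) sum_ij sigma^h_ij, gives the bound; the bound by 1 is trivial. *)

Section InnerProduct.
Context {R : realType}.
Implicit Types (a b : R) (x y z : R -> R).
Local Notation mu := (@lebesgue_measure R).

Lemma measurable_I01 : measurable (@I01 R).
Proof. exact: measurable_itv. Qed.

(* |x y| <= x^2 + y^2, so the inner product of two L^2 functions is a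
   finite Lebesgue integral. *)
Lemma L2_mul_integrable x y : L2 x -> L2 y ->
  mu.-integrable (@I01 R) (EFin \o (fun t => x t * y t)).
Proof.
move=> [mx ix] [my iy].
apply: (@le_integrable _ _ _ mu _ measurable_I01 _
  (fun t => ((x t ^+ 2)%:E + (y t ^+ 2)%:E)%E)).
- by apply/measurable_EFinP; exact: measurable_funM.
- move=> t _ /=; rewrite ?abse_EFin lee_fin (@ger0_norm _ (x t ^+ 2 + y t ^+ 2));
    last by rewrite addr_ge0 ?sqr_ge0.
  have := sqr_ge0 (x t + y t); have := sqr_ge0 (x t - y t); rewrite !expr2 => h1 h2.
  by have [xy0|xy0] := lerP 0 (x t * y t);
    [rewrite ger0_norm // | rewrite ltr0_norm //]; nra.
- by apply: (integrableD _ ix iy); exact: measurable_itv.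
Qed.

(* L^2[0,1] is a vector space: (a x + b y)^2 <= 2 a^2 x^2 + 2 b^2 y^2. *)
Lemma L2_lin a b {x y} : L2 x -> L2 y -> L2 (fun t => a * x t + b * y t).
Proof.
move=> [mx ix] [my iy]; split.
  by apply: measurable_funD; apply: measurable_funM => //; exact: measurable_cst.
apply: (@le_integrable _ _ _ mu _ measurable_I01 _
  (fun t => ((2 * a ^+ 2)%:E * (x t ^+ 2)%:E + (2 * b ^+ 2)%:E * (y t ^+ 2)%:E)%E)).
- apply/measurable_EFinP; under eq_fun do rewrite expr2; apply: measurable_funM;
  by apply: measurable_funD; apply: measurable_funM => //; exact: measurable_cst.
- move=> t _ /=; rewrite -?EFinM -?EFinD ?abse_EFin lee_fin ger0_norm ?sqr_ge0 //.
  have := sqr_ge0 (a * x t - b * y t); have := sqr_ge0 (a * x t);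
  have := sqr_ge0 (b * y t); rewrite !expr2 => h1 h2 h3.
  by rewrite ger0_norm; nra.
- apply: (integrableD _); first exact: measurable_itv.
  + by apply: (integrableZl _); first exact: measurable_itv.
  + by apply: (integrableZl _); first exact: measurable_itv.
Qed.

Lemma L2_D {x y} : L2 x -> L2 y -> L2 (fun t => x t + y t).
Proof.
by move=> hx hy; have := L2_lin 1 1 hx hy; under eq_fun do rewrite !mul1r.
Qed.

Lemma L2_Z a {x} : L2 x -> L2 (fun t => a * x t).
Proof.
by move=> hx; have := L2_lin a 0 hx hx; under eq_fun do rewrite mul0r addr0.
Qed.

Lemma L2_B {x y} : L2 x -> L2 y -> L2 (fun t => x t - y t).
Proof.
by move=> hx hy; have := L2_lin 1 (-1) hx hy; under eq_fun do rewrite mul1r mulN1r.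
Qed.

Lemma ip_sym x y : ip x y = ip y x.
Proof. by apply: eq_Rintegral => t _; rewrite mulrC. Qed.

Lemma ip_ge0 x : 0 <= ip x x.
Proof. by apply: Rintegral_ge0 => t _; rewrite -expr2 sqr_ge0. Qed.

Lemma ip_Z a x z : L2 x -> L2 z -> ip (fun t => a * x t) z = a * ip x z.
Proof.
move=> hx hz; rewrite /ip -RintegralZl;
  [|exact: measurable_I01|exact: L2_mul_integrable].
by apply: eq_Rintegral => t _; rewrite mulrA.
Qed.

Lemma ip_D x y z : L2 x -> L2 y -> L2 z ->
  ip (fun t => x t + y t) z = ip x z + ip y z.
Proof.
move=> hx hy hz; rewrite /ip -RintegralD;
  [|exact: measurable_I01|exact: L2_mul_integrable..].
by apply: eq_Rintegral => t _; rewrite mulrDl.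
Qed.

Lemma ip_B x y z : L2 x -> L2 y -> L2 z ->
  ip (fun t => x t - y t) z = ip x z - ip y z.
Proof.
move=> hx hy hz; rewrite -mulN1r -ip_Z // -ip_D //; last exact: L2_Z.
by congr ip; apply/funext => t; rewrite mulN1r.
Qed.

(* Degenerate Cauchy-Schwarz: a function of zero norm is orthogonal to every
   L^2 function.  Expand 0 <= <z + s y, z + s y> = 2 s <z,y> + s^2 <y,y>
   and take s = - <z,y> / (<y,y> + 1). *)
Lemma ip_null {z y} : L2 z -> L2 y -> ip z z = 0 -> ip z y = 0.
Proof.
move=> hz hy hzz; set a := ip z y; set b := ip y y.
have b0 : 0 <= b := ip_ge0 y.
have quad s : 0 <= 2 * s * a + s ^+ 2 * b.
  have hsy := L2_Z s hy; have hw := L2_D hz hsy.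
  have := ip_ge0 (fun t => z t + s * y t).
  rewrite (ip_D z (fun t => s * y t)) // ip_Z // (ip_sym z) (ip_sym y).
  rewrite !(ip_D z (fun t => s * y t)) // !ip_Z // hzz [ip y z]ip_sym -/a -/b.
  by congr (_ <= _); ring.
pose s := - a / (b + 1).
have b1 : 0 < b + 1 by lra.
have sb : s * (b + 1) = - a by rewrite /s mulfVK // gt_eqF.
have : 0 <= - a ^+ 2 * (b + 2).
  have -> : - a ^+ 2 * (b + 2) = (2 * s * a + s ^+ 2 * b) * (b + 1) * (b + 1).
    have -> : a = - (s * (b + 1)) by rewrite sb opprK.
    by ring.
  by rewrite !mulr_ge0 // ltW.
by move=> h; apply/eqP; rewrite -sqrf_eq0 eq_le sqr_ge0 andbT; rewrite !expr2 in h *; nra.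
Qed.

Lemma ip_self_eq0 {x} : l2norm x = 0 -> ip x x = 0.
Proof. by move/eqP; rewrite /l2norm sqrtr_eq0 => h; apply/eqP; rewrite eq_le h ip_ge0. Qed.

End InnerProduct.

Lemma eventually_const_limit (R : realType) (u : nat -> R) c N :
  u @ \oo --> (0:R) -> (forall n, (N <= n)%N -> u n = c) -> c = 0.
Proof.
move=> u0 uc; have uc' : u @ \oo --> c.
  by apply: cvg_near_cst; exists N => // n /= /uc.
exact: cvg_unique _ uc' u0.
Qed.

Lemma sum_single (R : pzRingType) (c f : nat -> R) j n : (j < n)%N ->
  (forall k, k != j -> c k = 0) -> \sum_(k < n) c k * f k = c j * f j.
Proof.
move=> jn c0; rewrite (bigD1 (Ordinal jn)) //= big1 ?addr0 // => k kj.
by rewrite c0 ?mul0r //; apply: contra kj => /eqP kj; apply/eqP/val_inj.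
Qed.

(* Spectral facts about the square of a symmetric operator A: if
   A^2 = sum_j lam_j <nu_j, .> nu_j, then the matrix of A in the eigenbasis
   is diagonal with squared diagonal entries lam_j. *)
Section SquareSpectrum.
Context {R : realType} {A : (R -> R) -> (R -> R)}.
Hypothesis A_L2 : forall u, L2 u -> L2 (A u).
Hypothesis A_sym : forall u v, L2 u -> L2 v -> ip (A u) v = ip (A v) u.
Context {lam : nat -> R} {nu : nat -> R -> R}.
Hypothesis A2_spec : spectral_decomp (fun x => A (A x)) lam nu.

Lemma nu_L2 j : L2 (nu j).
Proof. by case: A2_spec => -[nuL _] _; exact: nuL. Qed.

Lemma nu_ip i j : ip (nu i) (nu j) = (i == j)%:R.
Proof. by case: A2_spec => -[_ nuI] _; exact: nuI. Qed.

Lemma lam_ge0 j : 0 <= lam j.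
Proof. by case: A2_spec => _ [l0 _]; exact: l0. Qed.

Lemma lam_antitone j k : (j <= k)%N -> lam k <= lam j.
Proof.
case: A2_spec => _ [_ [lamS _]] /subnK <-; elim: (k - j)%N => // n ih.
by rewrite addSn (le_trans (lamS _) ih).
Qed.

Lemma lam_pos_simple j k : 0 < lam j -> j != k -> lam k != lam j.
Proof.
case: A2_spec => _ [_ [_ [lamS_lt _]]] lj jk.
have lt_lam i l : (i < l)%N -> 0 < lam l -> lam l < lam i.
  move=> il ll; have le_l : lam l <= lam i.+1 by exact: lam_antitone.
  exact: le_lt_trans le_l (lamS_lt _ (lt_le_trans ll le_l)).
case: (ltngtP j k) => [jk'|kj|e]; last by rewrite e eqxx in jk.
- have [lk|lk] := lerP (lam k) 0; last by rewrite lt_eqF // lt_lam.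
  by apply/eqP => e; move: lj; rewrite -e ltNge lk.
- by rewrite gt_eqF // lt_lam.
Qed.

(* If x has a single spectral coordinate j, then A^2 x = lam_j <nu_j,x> nu_j
   (weakly), since the truncated expansions of A^2 x are eventually this
   single term and converge to A^2 x. *)
Lemma A2_single {x} j : L2 x -> (forall k, k != j -> ip (nu k) x = 0) ->
  forall y, L2 y -> ip (A (A x)) y = lam j * ip (nu j) x * ip (nu j) y.
Proof.
move=> hx xj y hy; case: A2_spec => _ [_ [_ [_ expand]]].
have hAAx : L2 (A (A x)) by apply/A_L2/A_L2.
have hres : L2 (fun t => A (A x) t - lam j * ip (nu j) x * nu j t).
  by apply: L2_B => //; apply: L2_Z; exact: nu_L2.
have res0 : l2norm (fun t => A (A x) t - lam j * ip (nu j) x * nu j t) = 0.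
  apply: (@eventually_const_limit _ _ _ j.+1 (expand x hx)) => n jn.
  congr l2norm; apply/funext => t.
  rewrite (@sum_single _ (fun k => lam k * ip (nu k) x) (fun k => nu k t) j n) //.
  by move=> k kj /=; rewrite xj // mulr0.
have hnj := nu_L2 j.
have := ip_null hres hy (ip_self_eq0 res0).
rewrite ip_B ?ip_Z //; last exact: L2_Z.
by move/eqP; rewrite subr_eq0 => /eqP.
Qed.

Lemma A2_nu j y : L2 y -> ip (A (A (nu j))) y = lam j * ip (nu j) y.
Proof.
move=> hy; rewrite (A2_single j (nu_L2 j)) ?nu_ip ?eqxx ?mulr1 //.
by move=> k kj; rewrite nu_ip (negbTE kj).
Qed.

Lemma norm_A_nu j : ip (A (nu j)) (A (nu j)) = lam j.
Proof.
have hj := nu_L2 j; have hAj := A_L2 _ hj.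
by rewrite -A_sym // A2_nu // nu_ip eqxx mulr1.
Qed.

(* A nu_j is an eigenvector of A^2 for lam_j, so testing it against nu_k
   gives (lam_k - lam_j) <A nu_j, nu_k> = 0. *)
Lemma A_nu_balance j k :
  lam k * ip (A (nu j)) (nu k) = lam j * ip (A (nu j)) (nu k).
Proof.
have hj := nu_L2 j; have hk := nu_L2 k.
have hAj := A_L2 _ hj; have hAk := A_L2 _ hk.
by rewrite {1}ip_sym -A2_nu // A_sym // A2_nu // ip_sym A_sym.
Qed.

Lemma A_nu_offdiag j k : j != k -> ip (A (nu j)) (nu k) = 0.
Proof.
move=> jk; have hj := nu_L2 j.
have [lj|lj] := lerP (lam j) 0.
  have lj0 : lam j = 0 by apply/eqP; rewrite eq_le lj lam_ge0.
  by apply: ip_null; [exact: A_L2 | exact: nu_L2 | rewrite norm_A_nu].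
have /eqP := A_nu_balance j k.
rewrite -subr_eq0 -mulrBl mulf_eq0 subr_eq0 (negbTE (lam_pos_simple j k lj jk)).
by rewrite /= => /eqP.
Qed.

(* A nu_j = <A nu_j, nu_j> nu_j, hence <A nu_j, nu_j>^2 = |A nu_j|^2 = lam_j. *)
Lemma A_nu_diag_sq j : ip (A (nu j)) (nu j) ^+ 2 = lam j.
Proof.
have hj := nu_L2 j; have hAj := A_L2 _ hj; have hAAj := A_L2 _ hAj.
have [lj|lj] := lerP (lam j) 0.
  have lj0 : lam j = 0 by apply/eqP; rewrite eq_le lj lam_ge0.
  by rewrite lj0 (ip_null hAj hj) ?expr0n // norm_A_nu.
have eigen y : L2 y -> ip (A (A (A (nu j)))) y = lam j * ip (A (nu j)) y.
  move=> hy; have hAy := A_L2 _ hy.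
  by rewrite A_sym // ip_sym A2_nu // ip_sym A_sym.
have single k : k != j -> ip (nu k) (A (nu j)) = 0.
  by move=> kj; rewrite ip_sym A_nu_offdiag // eq_sym.
have := A2_single j hAj single _ hAj.
rewrite eigen // norm_A_nu -mulrA => /(mulfI (lt0r_neq0 lj)).
by rewrite [ip (nu j) _]ip_sym expr2 => ->.
Qed.

Lemma sum_A_nu_sq n :
  \sum_(i < n) \sum_(j < n) ip (A (nu i)) (nu j) ^+ 2 = \sum_(j < n) lam j.
Proof.
apply: eq_bigr => i _; rewrite (bigD1 i) //= big1 ?addr0 ?A_nu_diag_sq //.
by move=> k ki; rewrite A_nu_offdiag ?expr0n //; apply: contra ki => /eqP e; apply/eqP/val_inj.
Qed.

Lemma A2_vanish : lam 0%N = 0 ->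
  forall x y, L2 x -> L2 y -> ip (A (A x)) y = 0.
Proof.
move=> l0 x y hx hy; case: A2_spec => _ [_ [_ [_ expand]]].
have lam0 k : lam k = 0.
  by apply/eqP; rewrite eq_le lam_ge0 andbT -l0 lam_antitone.
have hAAx : L2 (A (A x)) by apply/A_L2/A_L2.
apply: (ip_null hAAx hy); apply: ip_self_eq0.
apply: (@eventually_const_limit _ _ _ 0%N (expand x hx)) => n _.
by congr l2norm; apply/funext => t; rewrite big1 ?subr0 // => k _; rewrite lam0 !mul0r.
Qed.

End SquareSpectrum.

Section WeightedForm.
Context {R : realType}.
Variables (p : nat) (W : nat -> R) (d : nat -> nat).
Hypothesis W_ge0 : forall h, (h <= p)%N -> 0 <= W h.

Definition wsum (F : nat -> nat -> nat -> R) : R :=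
  \sum_(h < p.+1) W h * \sum_(i < d h) \sum_(j < d h) F h i j.

(* Weighted squared distance between two arrays; D_{g'} is
   wdist (kappa_{g'}) y. *)
Definition wdist (a b : nat -> nat -> nat -> R) : R :=
  wsum (fun h i j => (a h i j - b h i j) ^+ 2).

Lemma wsum_lin (u v : R) F G :
  wsum (fun h i j => u * F h i j + v * G h i j) = u * wsum F + v * wsum G.
Proof.
rewrite /wsum !mulr_sumr -big_split; apply: eq_bigr => h _ /=.
rewrite mulrCA [v * _]mulrCA -mulrDr; congr (_ * _).
rewrite !mulr_sumr -big_split; apply: eq_bigr => i _ /=.
by rewrite !mulr_sumr -big_split.
Qed.

Lemma wsum_le {F G} : (forall h i j, F h i j <= G h i j) -> wsum F <= wsum G.
Proof.
move=> FG; apply: ler_sum => h _; apply: ler_wpM2l; first by apply: W_ge0; rewrite -ltnS.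
by apply: ler_sum => i _; apply: ler_sum.
Qed.

Lemma wdist_ge0 a b : 0 <= wdist a b.
Proof.
apply: sumr_ge0 => h _; apply: mulr_ge0; first by apply: W_ge0; rewrite -ltnS.
by apply: sumr_ge0 => i _; apply: sumr_ge0 => j _; exact: sqr_ge0.
Qed.

Lemma wdistC a b : wdist a b = wdist b a.
Proof.
rewrite /wdist /wsum; apply: eq_bigr => h _; congr (_ * _).
by do 2 apply: eq_bigr => ? _; rewrite -sqrrN opprB.
Qed.

(* It follows by summing the
   pointwise bound (a0-y)^2 - (a1-y)^2 <= 2 (y-a0)^2 - (a0-a1)^2 / 2. *)
Lemma wdist_misassigned a0 a1 y :
  wdist a1 y <= wdist a0 y -> wdist a0 a1 / 4 <= wdist y a0.
Proof.
move=> closer.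
have pointwise h i j :
    1 * (a0 h i j - y h i j) ^+ 2 + -1 * (a1 h i j - y h i j) ^+ 2 <=
    - (1 / 2) * (a0 h i j - a1 h i j) ^+ 2 + 2 * (y h i j - a0 h i j) ^+ 2.
  have := sqr_ge0 ((a0 h i j - a1 h i j) + 2 * (y h i j - a0 h i j)).
  by rewrite !expr2 => ?; nra.
have := wsum_le pointwise; rewrite !wsum_lin -/(wdist a0 y) -/(wdist a1 y).
rewrite -/(wdist a0 a1) -/(wdist y a0); lra.
Qed.

End WeightedForm.

Section Expectations.
Context {R : realType} {dT : measure_display} {T : measurableType dT}.
Variable mu : {measure set T -> \bar R}.

Lemma markov_ge0 (f : T -> R) (c : R) :
  measurable_fun setT f -> (forall w, 0 <= f w) -> 0 < c ->
  (c%:E * mu [set w | (c <= f w)%R] <= \int[mu]_w (f w)%:E)%E.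
Proof.
move=> mf f0 c0; have mEf : measurable_fun setT (EFin \o f) by exact/measurable_EFinP.
have absf w : (`|(EFin \o f) w| = (f w)%:E)%E.
  by rewrite (_ : (EFin \o f) w = (f w)%:E) // abse_EFin ger0_norm.
rewrite (_ : [set w | _] = [set w | (c%:E <= `|(EFin \o f) w|)%E]); last first.
  by apply/seteqP; split => w /=; rewrite ?absf ?abse_EFin ?ger0_norm ?f0 ?lee_fin.
under eq_integral => w _ do rewrite -absf.
rewrite -[X in mu X]setTI.
exact: (@le_integral_comp_abse _ _ _ mu setT measurableT (EFin \o f) c id
  (@measurable_id _ _ setT) (fun _ r0 => r0) (fun _ _ _ _ => id) mEf c0).
Qed.

Lemma measurable_ler_set (f g : T -> R) :
  measurable_fun setT f -> measurable_fun setT g -> measurable [set w | f w <= g w].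
Proof.
by move=> mf mg; rewrite -(setTI [set w | f w <= g w]); apply: measurable_fun_le.
Qed.

Lemma measurable_ltr_set (f g : T -> R) :
  measurable_fun setT f -> measurable_fun setT g -> measurable [set w | f w < g w].
Proof.
move=> mf mg; rewrite (_ : [set w | f w < g w] = ~` [set w | g w <= f w]).
  exact/measurableC/measurable_ler_set.
by apply/seteqP; split => w /=; rewrite ltNge => /negP.
Qed.

Variables (p : nat) (W : nat -> R) (d : nat -> nat).

Lemma measurable_wsum (F : T -> nat -> nat -> nat -> R) :
  (forall h i j, (h <= p)%N -> measurable_fun setT (fun w => F w h i j)) ->
  measurable_fun setT (fun w => wsum p W d (F w)).
Proof.
move=> mF; apply: measurable_sum => h; apply: measurable_funM => //.
by do 2 apply: measurable_sum => ?; apply: mF; rewrite -ltnS.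
Qed.

Lemma integral_wsum (F : T -> nat -> nat -> nat -> R) :
  (forall h, (h <= p)%N -> 0 <= W h) -> (forall w h i j, 0 <= F w h i j) ->
  (forall h i j, (h <= p)%N -> measurable_fun setT (fun w => F w h i j)) ->
  (\int[mu]_w (wsum p W d (F w))%:E
   = \sum_(h < p.+1) (W h)%:E *
       \sum_(i < d h) \sum_(j < d h) \int[mu]_w (F w h i j)%:E)%E.
Proof.
move=> W0 F0 mF.
have mFE h i j : (h <= p)%N -> measurable_fun setT (fun w => (F w h i j)%:E).
  by move=> hp; apply/measurable_EFinP/mF.
rewrite (_ : (fun w => _) = (fun w => \sum_(h < p.+1)
    ((W h)%:E * \sum_(i < d h) \sum_(j < d h) (F w h i j)%:E))%E); last first.
  apply/funext => w; rewrite -sumEFin; apply: eq_bigr => h _.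
  by rewrite EFinM -sumEFin; congr (_ * _)%E; apply: eq_bigr => i _; rewrite sumEFin.
rewrite ge0_integral_sum //; last first.
- move=> h w _; apply: mule_ge0; first by rewrite lee_fin W0 // -ltnS.
  by do 2 apply: sume_ge0 => ? _; rewrite lee_fin.
- move=> h; apply: emeasurable_funM => //.
  by do 2 apply: emeasurable_sum => ?; apply: mFE; rewrite -ltnS.
apply: eq_bigr => h _; have hp : (h <= p)%N by rewrite -ltnS.
rewrite ge0_integralZl //; last 3 first.
- by do 2 apply: emeasurable_sum => ?; exact: mFE.
- by move=> w _; do 2 apply: sume_ge0 => ? _; rewrite lee_fin.
- by rewrite lee_fin W0.
congr (_ * _)%E; rewrite ge0_integral_sum //; last first.
- by move=> i w _; apply: sume_ge0 => ? _; rewrite lee_fin.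
- by move=> i; apply: emeasurable_sum => ?; exact: mFE.
apply: eq_bigr => i _; rewrite ge0_integral_sum //; last first.
- by move=> j w _; rewrite lee_fin.
- by move=> j; exact: mFE.
Qed.

End Expectations.

Lemma sum_gt0_witness {R : numDomainType} {n} {F : 'I_n -> R} i0 :
  (forall i, 0 <= F i) -> 0 < F i0 -> 0 < \sum_(i < n) F i.
Proof.
move=> F0 Fi0; rewrite (bigD1 i0) //=.
by apply: lt_le_trans Fi0 _; rewrite lerDl sumr_ge0.
Qed.

(* kappa_g^(h), being defined weakly as the expectation of a symmetrized
   product, is a symmetric operator. *)
Lemma kappa_sym {R : realType} {dT : measure_display} {T : measurableType dT}
  {P : probability T R} {X : bool -> nat -> T -> R -> R}
  {K : bool -> nat -> (R -> R) -> (R -> R)} :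
  (forall g' h k u v, L2 u -> L2 v ->
     ((ip (K g' h u) v)%:E
      = \int[P]_w (ip (X g' k w) v * ip (X g' (k + h)%N w) u
                   + ip (X g' (k + h)%N w) v * ip (X g' k w) u)%:E)%E) ->
  forall g' h u v, L2 u -> L2 v -> ip (K g' h u) v = ip (K g' h v) u.
Proof.
move=> HK g' h u v hu hv; apply: EFin_inj; rewrite (HK _ _ 0%N) // (HK _ _ 0%N) //.
by apply: eq_integral => w _; rewrite addrC [_ * ip _ u]mulrC [ip _ v * _]mulrC.
Qed.

Section LagDifference.
Context {R : realType} {K : bool -> nat -> (R -> R) -> (R -> R)}.
Hypothesis K_L2 : forall g h u, L2 u -> L2 (K g h u).
Hypothesis K_sym : forall g h u v, L2 u -> L2 v -> ip (K g h u) v = ip (K g h v) u.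
Context {h : nat}.

Lemma Delta_L2 u : L2 u -> L2 (Delta K h u).
Proof. by move=> hu; apply: L2_B; apply: K_L2. Qed.

Lemma Delta_sym u v : L2 u -> L2 v -> ip (Delta K h u) v = ip (Delta K h v) u.
Proof.
move=> hu hv; have [K0u K1u] := (K_L2 false h _ hu, K_L2 true h _ hu).
have [K0v K1v] := (K_L2 false h _ hv, K_L2 true h _ hv).
by rewrite /Delta !ip_B // K_sym // [ip (K true _ _) _]K_sym.
Qed.

Context {lam : nat -> R} {nu : nat -> nat -> R -> R}.
Hypothesis R_spec : spectral_decomp (Rop K h) lam (nu h).

Lemma kap_gap_sum n :
  \sum_(i < n) \sum_(j < n) (kap K nu false h i j - kap K nu true h i j) ^+ 2
  = \sum_(j < n) lam j.
Proof.
rewrite -(sum_A_nu_sq Delta_L2 Delta_sym R_spec n).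
have nuL i : L2 (nu h i) := nu_L2 R_spec i.
do 2 apply: eq_bigr => ? _.
by rewrite /Delta ip_B //; try apply: K_L2; exact: nuL.
Qed.

Lemma lam_top_pos e : ONB e -> (0 < hs_sq (Rop K h) e)%E -> 0 < lam 0%N.
Proof.
move=> [[e_L2 _] _] hs_pos; rewrite lt_def (lam_ge0 R_spec) andbT.
apply/eqP => lam0; move: hs_pos; rewrite /hs_sq eseries0 ?ltxx // => i _ _.
rewrite eseries0 // => j _ _.
by rewrite (A2_vanish Delta_L2 R_spec lam0) ?e_L2 // expr0n.
Qed.

End LagDifference.

Lemma measurable_yhat {R : realType} {dT : measure_display} {T : measurableType dT}
  (Y : T -> nat -> R -> R) (nu : nat -> nat -> R -> R) p h i j :
  (forall k u, L2 u -> measurable_fun setT (fun w => ip (Y w k) u)) ->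
  L2 (nu h i) -> L2 (nu h j) ->
  measurable_fun setT (fun w => yhat p (Y w) nu h i j).
Proof.
move=> mY hi hj; apply: measurable_funM => //; apply: measurable_sum => k.
by apply: measurable_funD; apply: measurable_funM; exact: mY.
Qed.

Section OracleClassifier.
Context {R : realType} {dT : measure_display} {T : measurableType dT}.
Variable P : probability T R.
Variables (X : bool -> nat -> T -> R -> R) (K : bool -> nat -> (R -> R) -> (R -> R)).
Variables (nu : nat -> nat -> R -> R) (lam : nat -> nat -> R).
Variables (p : nat) (d : nat -> nat) (W : nat -> R) (g : bool) (m : nat).
Hypothesis HX_meas : forall g' k u, L2 u -> measurable_fun setT (fun w => ip (X g' k w) u).
Hypothesis HK_L2 : forall g' h u, L2 u -> L2 (K g' h u).
Hypothesis HK : forall g' h k u v, L2 u -> L2 v ->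
  ((ip (K g' h u) v)%:E
   = \int[P]_w (ip (X g' k w) v * ip (X g' (k + h)%N w) u
                + ip (X g' (k + h)%N w) v * ip (X g' k w) u)%:E)%E.
Hypothesis Hspec : forall h, (h <= p)%N -> spectral_decomp (Rop K h) (lam h) (nu h).
Hypothesis HRpos : exists2 h, (h <= p)%N & exists e, ONB e /\ (0 < hs_sq (Rop K h) e)%E.
Hypothesis Hd : forall h, (h <= p)%N -> (0 < d h)%N.
Hypothesis HW : forall h, (h <= p)%N -> 0 < W h.

Let K_sym := kappa_sym HK.
Let W0 h : (h <= p)%N -> 0 <= W h. Proof. by move=> hp; exact/ltW/HW. Qed.
Let nuL h i : (h <= p)%N -> L2 (nu h i). Proof. by move=> hp; exact: nu_L2 (Hspec h hp) i. Qed.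

Definition sample (w : T) (k : nat) : R -> R := X g (m + k)%N w.

Definition misclass : set T :=
  if g then [set w | Dstat p W d K nu (sample w) false - Dstat p W d K nu (sample w) true < 0]
  else [set w | 0 <= Dstat p W d K nu (sample w) false - Dstat p W d K nu (sample w) true].

Definition yerr (w : T) : R := wdist p W d (yhat p (sample w) nu) (kap K nu g).

Definition gap : R := wdist p W d (kap K nu false) (kap K nu true).

Lemma gapE : gap = \sum_(h < p.+1) W h * \sum_(j < d h) lam h j.
Proof.
apply: eq_bigr => -[h hp] _ /=; rewrite ltnS in hp.
by rewrite (kap_gap_sum HK_L2 K_sym (Hspec h hp)).
Qed.

(* Some lag has ||R_h||_S > 0, hence a positive top eigenvalue. *)
Lemma gap_gt0 : 0 < gap.
Proof.
have [h0 h0p [e [eONB e_pos]]] := HRpos.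
have l0 := lam_top_pos HK_L2 (Hspec h0 h0p) e eONB e_pos.
have h0p' : (h0 < p.+1)%N by rewrite ltnS.
rewrite gapE; apply: (sum_gt0_witness (Ordinal h0p')) => [h|/=].
  have hp : (h <= p)%N by rewrite -ltnS.
  apply: mulr_ge0; first exact: W0.
  by apply: sumr_ge0 => j _; exact: lam_ge0 (Hspec h hp) j.
apply: mulr_gt0; first exact: HW.
apply: (sum_gt0_witness (Ordinal (Hd h0 h0p))) => [j|//].
exact: lam_ge0 (Hspec h0 h0p) j.
Qed.

Lemma measurable_sample_yhat h i j : (h <= p)%N ->
  measurable_fun setT (fun w => yhat p (sample w) nu h i j).
Proof.
move=> hp; apply: measurable_yhat => [k u hu||]; [exact: HX_meas | exact: nuL..].
Qed.

Lemma measurable_yerr : measurable_fun setT yerr.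
Proof.
apply: measurable_wsum => h i j hp; apply: measurable_funX.
by apply: measurable_funB; [exact: measurable_sample_yhat | exact: measurable_cst].
Qed.

Lemma measurable_misclass : measurable misclass.
Proof.
have mD g' : measurable_fun setT (fun w => Dstat p W d K nu (sample w) g').
  apply: (measurable_wsum p W d
    (fun w h i j => (kap K nu g' h i j - yhat p (sample w) nu h i j) ^+ 2)).
  move=> h i j hp; apply: measurable_funX.
  by apply: measurable_funB; [exact: measurable_cst | exact: measurable_sample_yhat].
have mdiff := measurable_funB (mD false) (mD true).
rewrite /misclass; case: ifP => _.
- by apply: measurable_ltr_set; [exact: mdiff | exact: measurable_cst].
- by apply: measurable_ler_set; [exact: measurable_cst | exact: mdiff].
Qed.

Lemma misclass_far : misclass `<=` [set w | gap / 4 <= yerr w].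
Proof.
move=> w; rewrite /misclass /yerr /gap; case: ifP => _ /= hw.
- rewrite wdistC; apply: wdist_misassigned => //; rewrite -subr_le0; exact: ltW.
- by apply: wdist_misassigned => //; rewrite -subr_ge0.
Qed.

Lemma integral_yerr : (\int[P]_w (yerr w)%:E
  = \sum_(h < p.+1) (W h)%:E * \sum_(i < d h) \sum_(j < d h)
      \int[P]_w ((yhat p (sample w) nu h i j - kap K nu g h i j) ^+ 2)%:E)%E.
Proof.
apply: (integral_wsum P p W d
  (fun w h i j => (yhat p (sample w) nu h i j - kap K nu g h i j) ^+ 2)) => //.
- by move=> *; exact: sqr_ge0.
- move=> h i j hp; apply: measurable_funX.
  by apply: measurable_funB; [exact: measurable_sample_yhat | exact: measurable_cst].
Qed.

(* Markov's inequality for yerr at level gap / 4: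
   P(misclass) gap <= P(yerr >= gap/4) gap <= 4 E[yerr]. *)
Lemma misclassification_bound :
  (P misclass <=
     Order.min
       (4%:E * (\sum_(h < p.+1) (W h)%:E * \sum_(i < d h) \sum_(j < d h)
          \int[P]_w ((yhat p (sample w) nu h i j - kap K nu g h i j) ^+ 2)%:E)
        * ((\sum_(h < p.+1) W h * \sum_(j < d h) lam h j)^-1)%:E)
       1)%E.
Proof.
have gpos := gap_gt0; have g4 : 0 < gap / 4 by lra.
have mA := measurable_misclass.
have mB := measurable_ler_set (fun=> gap / 4) yerr (measurable_cst _) measurable_yerr.
have markov := markov_ge0 P yerr (gap / 4) measurable_yerr
  (fun w => wdist_ge0 p W d W0 _ _) g4.
rewrite le_min probability_le1 // andbT -gapE lee_pdivlMr // -integral_yerr.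
apply: (@le_trans _ _ (P [set w | (gap / 4 <= yerr w)%R] * gap%:E)%E).
  apply: lee_wpmul2r; first by rewrite lee_fin ltW.
  by apply: le_measure; rewrite ?inE //; exact: misclass_far.
rewrite (_ : (_ * gap%:E = 4%:E * ((gap / 4)%:E * P [set w | (gap / 4 <= yerr w)%R]))%E).
  by apply: lee_wpmul2l => //; rewrite lee_fin.
have four : (4 : R) != 0 by rewrite pnatr_eq0.
by rewrite muleA -EFinM mulrCA mulfV // mulr1 muleC.
Qed.

End OracleClassifier.

Theorem theorem1
  (R : realType) (dT : measure_display) (T : measurableType dT)
  (P : probability T R)
  (X : bool -> nat -> T -> R -> R)
  (K : bool -> nat -> (R -> R) -> (R -> R))
  (nu : nat -> nat -> R -> R) (lam : nat -> nat -> R)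
  (p : nat) (d : nat -> nat) (W : nat -> R) (g : bool) (m : nat)
  (* each X_k^(g') is a random element of L^2[0,1] *)
  (HX_L2 : forall g' k w, L2 (X g' k w))
  (HX_meas : forall g' k u, L2 u -> measurable_fun setT (fun w => ip (X g' k w) u))
  (* mean function zero *)
  (Hmean : forall g' k u, L2 u ->
     (\int[P]_w (ip (X g' k w) u)%:E = 0)%E)
  (* weak stationarity *)
  (Hstat : forall g' k h u v, L2 u -> L2 v ->
     (\int[P]_w (ip (X g' k w) u * ip (X g' (k + h)%N w) v)%:E
      = \int[P]_w (ip (X g' 0%N w) u * ip (X g' h w) v)%:E)%E)
  (* E ||X_k^(g')||^4 < oo *)
  (H4 : forall g' k, (\int[P]_w ((l2norm (X g' k w)) ^+ 4)%:E < +oo)%E)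
  (* kappa_{g'}^{(h)} = C^{(h)} + C^{(-h)}, defined weakly *)
  (HK_L2 : forall g' h u, L2 u -> L2 (K g' h u))
  (HK : forall g' h k u v, L2 u -> L2 v ->
     ((ip (K g' h u) v)%:E
      = \int[P]_w (ip (X g' k w) v * ip (X g' (k + h)%N w) u
                   + ip (X g' (k + h)%N w) v * ip (X g' k w) u)%:E)%E)
  (* spectral decomposition of R_h : discriminative feature functions *)
  (Hspec : forall h, (h <= p)%N -> spectral_decomp (Rop K h) (lam h) (nu h))
  (* some lag h <= p with ||R_h||_S > 0 *)
  (HRpos : exists2 h, (h <= p)%N &
     exists e, ONB e /\ (0 < hs_sq (Rop K h) e)%E)
  (Hd : forall h, (h <= p)%N -> (0 < d h)%N)
  (HW : forall h, (h <= p)%N -> 0 < W h) :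
  let Y (w : T) (k : nat) := X g (m + k)%N w in
  let D (w : T) (g' : bool) := Dstat p W d K nu (Y w) g' in
  let misclass :=
    if g then [set w | D w false - D w true < 0]
    else [set w | 0 <= D w false - D w true] in
  let sigma (h i j : nat) :=
    (\int[P]_w ((yhat p (Y w) nu h i j - kap K nu g h i j) ^+ 2)%:E)%E in
  (P misclass <=
     Order.min
       (4%:E * (\sum_(h < p.+1) (W h)%:E * \sum_(i < d h) \sum_(j < d h) sigma h i j)
        * ((\sum_(h < p.+1) W h * \sum_(j < d h) lam h j)^-1)%:E)
       1)%E.
Proof. exact: misclassification_bound. Qed.
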